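(* Let $n>5$ be prime, and let $v(t)$ be the random walk on $\mathbb{Z}_n$ whose step distribution is uniform over a finite multiset $\Gamma$ of elements of $\mathbb{Z}_n$. If the drift $D(\Gamma)=\sum_{k\in\Gamma}k$ (sum with multiplicity, computed in $\mathbb{Z}_n$) is nonzero, then $v(t)$ is reconstructive.
   Context: The step distribution uniform over the multiset $\Gamma$ assigns to $k$ the probability (multiplicity of $k$ in $\Gamma$)/$|\Gamma|$. The random walk $v(t)$ has $v(1)$ uniform on $\mathbb{Z}_n$ and independent steps with this distribution. A labeling is $f:\mathbb{Z}_n\to\{0,1\}$. The walk is reconstructive if, for any two labelings $f_1,f_2$, the distributions of $\{f_1(v(t))\}_{t\ge1}$ and $\{f_2(v(t))\}_{t\ge1}$ coincide only if there is $\ell\in\mathbb{Z}_n$ with $f_1(k)=f_2(k+\ell)$ for all $k$. *)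

From mathcomp Require Import all_boot all_order all_algebra.
Set Implicit Arguments. Unset Strict Implicit. Unset Printing Implicit Defensive.
Import Order.TTheory GRing.Theory Num.Theory.
Local Open Scope ring_scope.

(* Random walk on 'Z_n with step distribution uniform over the multiset
   Gam (a seq, multiplicities counted), labeling f : 'Z_n -> bool.

   label_prob Gam f x w = probability that, starting at x, the observed labels
   f(v(1)), ..., f(v(|w|)) equal the word w. *)
Fixpoint label_prob (n : nat) (Gam : seq 'Z_n) (f : 'Z_n -> bool) (x : 'Z_n)
    (w : seq bool) : rat :=
  match w with
  | [::] => 1
  | b :: w' =>
      if f x == b then
        (size Gam)%:R^-1 * \sum_(g <- Gam) label_prob Gam f (x + g) w'
      else 0
  end.

(* Law of the label process with v(1) uniform on 'Z_n: the probability of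
   each finite prefix (finite-dimensional distributions; these determine the
   distribution of the infinite sequence). *)
Definition label_law (n : nat) (Gam : seq 'Z_n) (f : 'Z_n -> bool)
    (w : seq bool) : rat :=
  #|{: 'Z_n}|%:R^-1 * \sum_(x : 'Z_n) label_prob Gam f x w.

Definition same_label_law (n : nat) (Gam : seq 'Z_n) (f1 f2 : 'Z_n -> bool) :=
  forall w : seq bool, label_law Gam f1 w = label_law Gam f2 w.

Definition reconstructive (n : nat) (Gam : seq 'Z_n) : Prop :=
  forall f1 f2 : 'Z_n -> bool, same_label_law Gam f1 f2 ->
    exists l : 'Z_n, forall k : 'Z_n, f1 k = f2 (k + l).

Definition drift (n : nat) (Gam : seq 'Z_n) : 'Z_n := \sum_(k <- Gam) k.

From mathcomp Require Import all_boot all_order all_algebra all_field.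
From mathcomp Require Import ring.
Set Implicit Arguments. Unset Strict Implicit. Unset Printing Implicit Defensive.
Import Order.TTheory GRing.Theory Num.Theory.
Local Open Scope ring_scope.

(* The transition operator of the walk is diagonalised by the characters
   x |-> w^(x xi) of Z_p (w a primitive p-th root of unity), with eigenvalues
   eig xi = |Gam|^-1 \sum_(g in Gam) w^(g xi).  The only rational linear relation
   among the p-th roots of unity is 1 + w + ... + w^(p-1) = 0, so eig xi = eig zeta
   forces the multisets xi Gam and zeta Gam to coincide, whence xi D = zeta D, and
   eig xi = 0 forces every residue to occur equally often in xi Gam, whence xi D = 0
   (p odd).  So for D != 0 the eigenvalues are nonzero and pairwise distinct.
   The label law determines the correlations \sum_x f x P^a (f P^b f) x, which equal
   p^-2 \sum_(zeta, xi) eig zeta^a eig xi^b F(-zeta) F(xi) F(zeta - xi) for F the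
   Fourier transform of f; a Vandermonde argument recovers this bispectrum.  For a
   nonconstant 0/1-valued f, F never vanishes (by the same rational relation), so the
   ratio of the transforms of two labelings with equal bispectra is a character of
   Z_p, that is, the labelings differ by a translation. *)

Lemma power_sums_eq0 (I : finType) (F : fieldType) (l c : I -> F) :
    injective l -> (forall i, l i != 0) ->
  (forall s, \sum_i l i ^+ s.+1 * c i = 0) -> forall i, c i = 0.
Proof.
move=> l_inj l_neq0 sums0 i0.
pose q := \prod_(j | j != i0) ('X - (l j)%:P).
have q_l i : i != i0 -> q.[l i] = 0.
  by move=> ni; rewrite horner_prod (bigD1 i ni) /= hornerXsubC subrr mul0r.
have q_l0 : q.[l i0] != 0.
  rewrite horner_prod prodf_seq_neq0; apply/allP => j _; apply/implyP => nj.
  by rewrite hornerXsubC subr_eq0; apply: contra nj => /eqP/l_inj ->.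
have : \sum_i q.[l i] * l i * c i = 0.
  under eq_bigr do rewrite horner_coef !mulr_suml.
  rewrite exchange_big big1 // => k _.
  have -> : \sum_i q`_k * l i ^+ k * l i * c i = q`_k * \sum_i l i ^+ k.+1 * c i.
    by rewrite mulr_sumr; apply: eq_bigr => i _; rewrite exprS; ring.
  by rewrite sums0 mulr0.
rewrite (bigD1 i0) //= big1 => [|i ni]; last by rewrite q_l // !mul0r.
by move/eqP; rewrite addr0 !mulf_eq0 (negbTE q_l0) (negbTE (l_neq0 i0)) => /eqP.
Qed.

Lemma power_sums2_eq (I : finType) (F : fieldType) (l : I -> F) (c1 c2 : I -> I -> F) :
    injective l -> (forall i, l i != 0) ->
    (forall s t, \sum_i \sum_j l i ^+ s.+1 * l j ^+ t.+1 * c1 i j =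
                 \sum_i \sum_j l i ^+ s.+1 * l j ^+ t.+1 * c2 i j) ->
  forall i j, c1 i j = c2 i j.
Proof.
move=> l_inj l_neq0 sums_eq i j; apply/eqP; rewrite -subr_eq0; apply/eqP.
move: j; apply: (power_sums_eq0 l_inj l_neq0) => t.
move: i; apply: (power_sums_eq0 l_inj l_neq0) => s.
rewrite -[RHS](subrr (\sum_i \sum_j l i ^+ s.+1 * l j ^+ t.+1 * c2 i j)).
rewrite -{1}sums_eq -sumrB; apply: eq_bigr => i _.
rewrite mulr_sumr -sumrB; apply: eq_bigr => j _; ring.
Qed.

Lemma sum_count_mem (T : finType) (V : nmodType) (F : T -> V) (s : seq T) :
  \sum_(g <- s) F g = \sum_k F k *+ count_mem k s.
Proof.
elim: s => [|a s IH]; first by rewrite big_nil big1 // => k _; rewrite mulr0n.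
rewrite big_cons IH /=; under [RHS]eq_bigr do rewrite mulrnDr.
rewrite big_split /=; congr (_ + _).
rewrite (bigD1 a) //= eqxx big1 ?addr0 // => k k_neq_a.
by rewrite eq_sym (negbTE k_neq_a).
Qed.

Section Fourier.
(* Z_p is written 'Z_(p'.+2) so that its ring structure is available without casts. *)
Variable p' : nat.
Local Notation p := p'.+2.
Variable w : algC.
Hypothesis w_prim : p.-primitive_root w.

Definition chi (x : 'Z_p) : algC := w ^+ x.

Lemma chiD x y : chi (x + y) = chi x * chi y.
Proof. by rewrite /chi /= prim_expr_mod // exprD. Qed.

Lemma chi0 : chi 0 = 1.
Proof. exact: expr0. Qed.

Lemma chiM x y : chi (x * y) = w ^+ (x * y)%N.
Proof. by rewrite /chi /= prim_expr_mod. Qed.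

Lemma chi_eq1 x : (chi x == 1) = (x == 0).
Proof.
rewrite /chi -(prim_order_dvd w_prim); apply/idP/eqP => [|-> //].
case: x => -[|k] Hk /= dvd_k; first exact: val_inj.
by move: (dvdn_leq (ltn0Sn k) dvd_k); rewrite leqNgt Hk.
Qed.

Lemma sum_chiM x : \sum_y chi (x * y) = if x == 0 then p%:R else 0.
Proof.
have [->|x_neq0] := eqVneq x 0.
  by under eq_bigr do rewrite mul0r chi0; rewrite sumr_const card_ord.
have : (chi x - 1) * \sum_y chi (x * y) = 0.
  have -> : \sum_y chi (x * y) = \sum_(i < p) chi x ^+ i.
    by apply: eq_bigr => y _; rewrite chiM /chi exprM.
  by rewrite -subrX1 /chi -exprM mulnC exprM (prim_expr_order w_prim) expr1n subrr.
by move/eqP; rewrite mulf_eq0 subr_eq0 chi_eq1 (negbTE x_neq0) => /eqP.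
Qed.

Definition dft (h : 'Z_p -> algC) xi := \sum_y h y * chi (- (y * xi)).

Lemma dft_inversion h x : h x = p%:R^-1 * \sum_xi dft h xi * chi (x * xi).
Proof.
have -> : \sum_xi dft h xi * chi (x * xi) = \sum_y h y * \sum_xi chi ((x - y) * xi).
  under eq_bigr do rewrite mulr_suml.
  rewrite exchange_big; apply: eq_bigr => y _; rewrite mulr_sumr.
  by apply: eq_bigr => xi _; rewrite -mulrA -chiD mulrBl addrC.
rewrite (bigD1 x) //= subrr sum_chiM eqxx big1 => [|y y_neq_x]; last first.
  by rewrite sum_chiM subr_eq0 eq_sym (negbTE y_neq_x) mulr0.
by rewrite addr0 mulrCA mulVf ?mulr1 // pnatr_eq0.
Qed.

Lemma dft_inj h1 h2 : dft h1 =1 dft h2 -> h1 =1 h2.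
Proof.
by move=> eq_dft x; rewrite dft_inversion [RHS]dft_inversion; under eq_bigr do rewrite eq_dft.
Qed.

Lemma dft_shift h j xi : dft (fun y => h (y + j)) xi = chi (j * xi) * dft h xi.
Proof.
rewrite /dft mulr_sumr (reindex_inj (addIr (- j))) /=.
apply: eq_bigr => y _; rewrite subrK mulrCA -chiD; congr (_ * chi _); ring.
Qed.

Lemma dft_mul_fourier g (a : 'Z_p -> algC) zeta :
  dft (fun y => g y * \sum_xi a xi * chi (y * xi)) zeta =
  \sum_xi a xi * dft g (zeta - xi).
Proof.
rewrite /dft; under eq_bigr do rewrite mulr_sumr mulr_suml.
rewrite exchange_big; apply: eq_bigr => xi _; rewrite mulr_sumr.
apply: eq_bigr => y _.
have -> : chi (- (y * (zeta - xi))) = chi (y * xi) * chi (- (y * zeta)).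
  by rewrite -chiD; congr chi; ring.
ring.
Qed.

Lemma sum_mul_fourier g (a : 'Z_p -> algC) :
  \sum_x g x * \sum_zeta a zeta * chi (x * zeta) =
  \sum_zeta a zeta * dft g (- zeta).
Proof.
rewrite /dft; under eq_bigr do rewrite mulr_sumr.
rewrite exchange_big; apply: eq_bigr => zeta _; rewrite mulr_sumr.
by apply: eq_bigr => x _; rewrite mulrCA mulrN opprK.
Qed.

Lemma additive_char (h : 'Z_p -> algC) :
  h 0 = 1 -> {morph h : a b / a + b >-> a * b} -> exists j, forall x, h x = chi (j * x).
Proof.
move=> h0 hD.
have h_nat k : h k%:R = h 1 ^+ k.
  by elim: k => [|k IH]; rewrite ?h0 // -natr1 hD IH exprSr.
have h1p : h 1 ^+ p = 1 by rewrite -h_nat pchar_Zp.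
have [j h1] := prim_rootP w_prim h1p.
by exists j => x; rewrite -[in LHS](natr_Zp x) h_nat h1 -exprM chiM mulnC.
Qed.

Definition bispectrum (F : 'Z_p -> algC) zeta xi := F (- zeta) * F xi * F (zeta - xi).

Lemma bispectrum_unit_char (H : 'Z_p -> algC) : H 0 = 1 ->
    (forall zeta xi, bispectrum H zeta xi = 1) ->
  exists j, forall x, H x = chi (j * x).
Proof.
move=> H0 H_triple; apply: additive_char => // a b.
have HN x : H x * H (- x) = 1.
  by have := H_triple 0 x; rewrite /bispectrum oppr0 H0 mul1r sub0r.
have := H_triple (a + b) a; rewrite /bispectrum [a + b - a]addrC addKr => H_ab.
by rewrite -[LHS]mulr1 -H_ab !mulrA HN mul1r mulrC.
Qed.

Definition ind (f : 'Z_p -> bool) x : algC := (f x)%:R.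

Lemma ind_inj f1 f2 : ind f1 =1 ind f2 -> f1 =1 f2.
Proof. by move=> eq_ind x; move/eqP: (eq_ind x); rewrite eqr_nat; do 2!case: (_ x). Qed.

Lemma dft_ind0 f : dft (ind f) 0 = #|f|%:R.
Proof.
rewrite /dft -sum1_card natr_sum [RHS]big_mkcond /=.
by apply: eq_bigr => y _; rewrite mulr0 oppr0 chi0 mulr1 /ind unfold_in; case: (f y).
Qed.

Lemma eqfun_trivial_card (f1 f2 : 'Z_p -> bool) :
  #|f1| = #|f2| -> ~~ (0 < #|f1| < p)%N -> f1 =1 f2.
Proof.
have card_full (f : 'Z_p -> bool) : #|f| = p -> f =1 predT.
  move=> f_full x; have := cardC f; rewrite f_full card_ord -[RHS]addn0 => /addnI.
  by move/card0_eq/(_ x); rewrite !inE => /negbFE.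
move=> eq_card; rewrite negb_and -!leqNgt leqn0 => /orP[/eqP f1_0 | f1_p].
  have f2_0 : #|f2| = 0 by rewrite -eq_card.
  by move=> x; move: (card0_eq f1_0 x) (card0_eq f2_0 x); rewrite !unfold_in => -> ->.
have f1_full : #|f1| = p.
  by apply/eqP; rewrite eqn_leq f1_p andbT; move: (max_card f1); rewrite card_ord.
by move=> x; rewrite card_full // card_full // -eq_card.
Qed.

Lemma sum_chi_count (s : seq 'Z_p) :
  \sum_(g <- s) chi g = \sum_k (count_mem k s)%:R * chi k.
Proof. by rewrite sum_count_mem; under [RHS]eq_bigr do rewrite mulr_natl. Qed.

Section PrimeModulus.
Hypothesis p_prime : prime p.

Lemma Zp_unitE (x : 'Z_p) : (x \is a GRing.unit) = (x != 0).
Proof.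
rewrite -[x]natr_Zp unitZpE // prime_coprime // natr_Zp.
apply/idP/idP => [|x_neq0]; first by apply: contra => /eqP ->; rewrite dvdn0.
have x_gt0 : (0 < x)%N by rewrite lt0n; apply: contraNneq x_neq0 => x0; apply/eqP/val_inj.
by apply: contraL (ltn_ord x) => /(dvdn_leq x_gt0); rewrite leqNgt.
Qed.

Definition cyclo_prime : {poly rat} := \poly_(i < p) 1.

Lemma size_cyclo_prime : size cyclo_prime = p.
Proof. by rewrite size_poly_eq // oner_neq0. Qed.

Lemma cyclo_prime_monic : cyclo_prime \is monic.
Proof. by rewrite monicE lead_coefE size_cyclo_prime coef_poly ltnSn. Qed.

Lemma horner_map_poly_wide (q : {poly rat}) (c : 'I_p -> rat) :
    (forall i : 'I_p, q`_i = c i) -> (size q <= p)%N ->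
  (map_poly ratr q).[w] = \sum_(i < p) ratr (c i) * w ^+ i.
Proof.
move=> qc size_q; rewrite (horner_coef_wide (n := p)).
  by apply: eq_bigr => i _; rewrite coef_map qc.
by rewrite size_map_inj_poly ?rmorph0 //; apply: fmorph_inj.
Qed.

Lemma root_cyclo_prime : root (map_poly ratr cyclo_prime) w.
Proof.
have w_neq1 : w != 1.
  by apply/eqP => w1; have := prim_order_dvd w_prim 1; rewrite expr1 w1 eqxx dvdn1.
apply/rootP; rewrite (@horner_map_poly_wide _ (fun=> 1)) ?size_cyclo_prime //; last first.
  by move=> i; rewrite coef_poly ltn_ord.
under eq_bigr do rewrite rmorph1 mul1r.
have : (w - 1) * \sum_(i < p) w ^+ i = 0 by rewrite -subrX1 prim_expr_order // subrr.
by move/eqP; rewrite mulf_eq0 subr_eq0 (negbTE w_neq1) => /eqP.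
Qed.

Lemma cyclo_prime_dvd q : root (map_poly ratr q) w -> cyclo_prime %| q.
Proof.
have [pw [map_pw pw_monic] root_pw] := minCpolyP w.
have size_pw : size pw = p.
  have := size_cyclotomic w p; rewrite -(minCpoly_cyclotomic w_prim) map_pw.
  rewrite size_map_inj_poly ?rmorph0 ?totient_prime //; exact: fmorph_inj.
have : pw %= cyclo_prime.
  by rewrite -dvdp_size_eqp ?size_pw ?size_cyclo_prime // -root_pw root_cyclo_prime.
by rewrite eqp_monic ?cyclo_prime_monic // => /eqP <-; rewrite -root_pw.
Qed.

Lemma chi_rat_free (d : 'Z_p -> rat) :
  \sum_k ratr (d k) * chi k = 0 -> forall k, d k = d 0.
Proof.
move=> sum_d0; pose q := \poly_(i < p) d (inord i).
have q_d (k : 'Z_p) : q`_k = d k by rewrite coef_poly ltn_ord inord_val.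
have /dvdpP [r q_eq] : cyclo_prime %| q.
  by apply/cyclo_prime_dvd/rootP; rewrite (horner_map_poly_wide q_d) ?size_poly.
have size_r : (size r <= 1)%N.
  have [->|r_neq0] := eqVneq r 0; first by rewrite size_poly0.
  move: (size_poly p (fun i => d (inord i))); rewrite -/q q_eq.
  rewrite size_Mmonic ?cyclo_prime_monic // size_cyclo_prime.
  by rewrite addnS /= addnS ltnS -add1n leq_add2r.
have q_r (k : 'Z_p) : d k = r`_0.
  by rewrite -q_d q_eq (size1_polyC size_r) coefCM coef_poly ltn_ord mulr1 coefC.
by move=> k; rewrite !q_r.
Qed.

Lemma perm_eq_sum_chi (s1 s2 : seq 'Z_p) : size s1 = size s2 ->
  \sum_(g <- s1) chi g = \sum_(g <- s2) chi g -> perm_eq s1 s2.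
Proof.
move=> size_eq sum_eq; pose d k : rat := (count_mem k s1)%:R - (count_mem k s2)%:R.
have /chi_rat_free d_const : \sum_k ratr (d k) * chi k = 0.
  under eq_bigr do rewrite rmorphB !rmorph_nat mulrBl.
  by rewrite sumrB -!sum_chi_count sum_eq subrr.
have sum_count (s : seq 'Z_p) : \sum_k (count_mem k s)%:R = (size s)%:R :> rat.
  by rewrite -sum1_size natr_sum (sum_count_mem _ s); under [RHS]eq_bigr do rewrite mulr1n.
have d0 : d 0 = 0.
  have : \sum_k d k = 0 by rewrite sumrB !sum_count size_eq subrr.
  under eq_bigr do rewrite d_const.
  by rewrite sumr_const card_ord -mulr_natl => /eqP; rewrite mulf_eq0 pnatr_eq0 => /eqP.
apply/allP => k _; apply/eqP/eqP; rewrite -(eqr_nat rat) -subr_eq0.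
by rewrite -/(d k) d_const d0.
Qed.

Lemma sum_Zp_odd : (2 < p)%N -> \sum_(k : 'Z_p) k = 0.
Proof.
move=> p_gt2; set S := \sum_k k.
have S2 : S + S = 0 by rewrite {2}/S (reindex_inj oppr_inj) /= sumrN subrr.
have two_unit : (2 : 'Z_p) \is a GRing.unit.
  by rewrite Zp_unitE; apply/eqP => /(congr1 val) /=; rewrite !modn_small.
by apply: (mulrI two_unit); rewrite mulr_natl mulr2n mulr0.
Qed.

Lemma sum_chi_eq0 (s : seq 'Z_p) : (2 < p)%N ->
  \sum_(g <- s) chi g = 0 -> \sum_(g <- s) g = 0.
Proof.
move=> p_gt2 sum0.
have /chi_rat_free count_const : \sum_k ratr (count_mem k s)%:R * chi k = 0.
  by under eq_bigr do rewrite ratr_nat; rewrite -sum_chi_count.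
have count_eq k : count_mem k s = count_mem 0 s.
  by apply/eqP; rewrite -(eqr_nat rat) count_const.
rewrite sum_count_mem; under eq_bigr do rewrite count_eq.
by rewrite sumrMnl sum_Zp_odd // mul0rn.
Qed.

Lemma dft_ind_neq0 (f : 'Z_p -> bool) xi : (0 < #|f| < p)%N -> dft (ind f) xi != 0.
Proof.
move=> /andP [f_gt0 f_ltp]; have [->|xi_neq0] := eqVneq xi 0.
  by rewrite dft_ind0 pnatr_eq0 -lt0n.
have xi_unit : xi \is a GRing.unit by rewrite Zp_unitE.
apply: contraTneq f_ltp => dft0; rewrite -leqNgt.
pose d k : rat := (f (- (k / xi)))%:R.
have /chi_rat_free d_const : \sum_k ratr (d k) * chi k = 0.
  rewrite -[RHS]dft0 /dft (reindex_inj (inj_comp oppr_inj (mulIr xi_unit))) /=.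
  by apply: eq_bigr => y _; rewrite /d ratr_nat mulNr opprK mulrK.
have f_const y : f y = f 0.
  move: (d_const (- (y * xi))); rewrite /d mulNr opprK mulrK // mul0r oppr0.
  by move/eqP; rewrite eqr_nat; do 2!case: (f _).
have [f0|nf0] := boolP (f 0).
  have fC0 : #|[predC f]| = 0.
    by apply: eq_card0 => y; rewrite !inE unfold_in f_const f0.
  by move: (cardC f); rewrite fC0 addn0 card_ord => ->.
have f_0 : #|f| = 0 by apply: eq_card0 => y; rewrite unfold_in f_const (negbTE nf0).
by rewrite f_0 in f_gt0.
Qed.

Lemma bispectrum_dft_ind_inj (f1 f2 : 'Z_p -> bool) :
    bispectrum (dft (ind f1)) =2 bispectrum (dft (ind f2)) ->
  exists l, forall k, f1 k = f2 (k + l).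
Proof.
move=> eq_bis; have eq_card : #|f1| = #|f2|.
  have cube f : bispectrum (dft (ind f)) 0 0 = (#|f| ^ 3)%:R.
    by rewrite /bispectrum subrr oppr0 -expr2 -exprSr dft_ind0 natrX.
  by apply/eqP; rewrite -(eqn_exp2r _ _ (isT : 0 < 3)%N) -(eqr_nat algC) -!cube eq_bis.
have [f1_nontriv|f1_triv] := boolP (0 < #|f1| < p)%N; last first.
  by exists 0 => k; rewrite addr0; apply: eqfun_trivial_card.
have f2_nontriv : (0 < #|f2| < p)%N by rewrite -eq_card.
set F1 := dft (ind f1); set F2 := dft (ind f2).
have F1_neq0 xi : F1 xi != 0 by apply: dft_ind_neq0.
have [j F_ratio] : exists j, forall xi, F2 xi / F1 xi = chi (j * xi).
  apply: bispectrum_unit_char => [|zeta xi].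
    by rewrite /F1 /F2 !dft_ind0 eq_card divff // -eq_card -dft_ind0.
  by rewrite /bispectrum !mulf_div -/(bispectrum F2 zeta xi) -eq_bis divff // !mulf_neq0.
have F2_shift : F2 =1 dft (fun y => ind f1 (y + j)).
  by move=> xi; rewrite dft_shift -F_ratio divfK.
have f2_shift : f2 =1 (fun y => f1 (y + j)) := ind_inj (dft_inj F2_shift).
by exists (- j) => k; rewrite f2_shift subrK.
Qed.
End PrimeModulus.

Section RandomWalk.
Variable Gam : seq 'Z_p.
Local Notation m := (size Gam).

Definition step (h : 'Z_p -> algC) x := m%:R^-1 * \sum_(g <- Gam) h (x + g).

Definition eig xi := m%:R^-1 * \sum_(g <- Gam) chi (g * xi).

Lemma eq_step h1 h2 : h1 =1 h2 -> step h1 =1 step h2.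
Proof. by move=> eq_h x; rewrite /step; under eq_bigr do rewrite eq_h. Qed.

Lemma sum_step (I : Type) (r : seq I) (F : I -> 'Z_p -> algC) x :
  \sum_(i <- r) step (F i) x = step (fun y => \sum_(i <- r) F i y) x.
Proof. by rewrite /step -mulr_sumr exchange_big. Qed.

Lemma step_cst c x : Gam != [::] -> step (fun=> c) x = c.
Proof.
move=> Gam_neq_nil; rewrite /step big_const_seq count_predT iter_addr_0.
by rewrite -[c *+ m]mulr_natl mulKf // pnatr_eq0 size_eq0.
Qed.

Lemma eq_iter_step k h1 h2 : h1 =1 h2 -> iter k step h1 =1 iter k step h2.
Proof. by move=> eq_h; elim: k => //= k IH; apply: eq_step. Qed.

Lemma sum_iter_step (I : Type) (r : seq I) k (F : I -> 'Z_p -> algC) x :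
  \sum_(i <- r) iter k step (F i) x = iter k step (fun y => \sum_(i <- r) F i y) x.
Proof. by elim: k x => //= k IH x; rewrite sum_step (eq_step IH). Qed.

Lemma step_fourier (a : 'Z_p -> algC) x :
  step (fun y => \sum_xi a xi * chi (y * xi)) x = \sum_xi a xi * eig xi * chi (x * xi).
Proof.
rewrite /step exchange_big mulr_sumr; apply: eq_bigr => xi _.
under eq_bigr do rewrite mulrDl chiD mulrA.
by rewrite -mulr_sumr /eig; ring.
Qed.

Lemma iter_step_dft k h x :
  iter k step h x = \sum_xi p%:R^-1 * dft h xi * eig xi ^+ k * chi (x * xi).
Proof.
elim: k x => [|k IH] x.
  rewrite /= [LHS]dft_inversion mulr_sumr.
  by apply: eq_bigr => xi _; rewrite expr0 mulr1 mulrA.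
rewrite iterS (eq_step IH) step_fourier.
by apply: eq_bigr => xi _; rewrite exprS; ring.
Qed.

Definition moment (f : 'Z_p -> bool) a b :=
  \sum_x ind f x * iter a step (fun y => ind f y * iter b step (ind f) y) x.

Lemma moment_bispectrum f a b : moment f a b =
  \sum_zeta \sum_xi eig zeta ^+ a * eig xi ^+ b * (p%:R^-2 * bispectrum (dft (ind f)) zeta xi).
Proof.
rewrite /moment; under eq_bigr do rewrite iter_step_dft.
rewrite sum_mul_fourier; apply: eq_bigr => zeta _.
have -> : dft (fun y => ind f y * iter b step (ind f) y) zeta =
    \sum_xi p%:R^-1 * dft (ind f) xi * eig xi ^+ b * dft (ind f) (zeta - xi).
  by rewrite -dft_mul_fourier /dft; under eq_bigr do rewrite iter_step_dft.
rewrite mulr_sumr !mulr_suml; apply: eq_bigr => xi _; rewrite /bispectrum -exprVn; ring.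
Qed.

Fixpoint bitseqs s : seq bitseq :=
  if s is s'.+1 then map (cons true) (bitseqs s') ++ map (cons false) (bitseqs s')
  else [:: [::]].

Lemma label_prob_cons f x b u : ratr (label_prob Gam f x (b :: u)) =
  ((f x == b) : nat)%:R * step (fun y => ratr (label_prob Gam f y u)) x.
Proof.
rewrite /= /step; case: eqP => _ /=; last by rewrite rmorph0 mul0r.
by rewrite mul1r rmorphM /= fmorphV rmorph_nat rmorph_sum.
Qed.

Lemma sum_bitseqs_label_prob f s u x :
  \sum_(v <- bitseqs s) ratr (label_prob Gam f x (v ++ u)) =
  iter s step (fun y => ratr (label_prob Gam f y u)) x.
Proof.
elim: s x => [|s IH] x /=; first by rewrite big_seq1.
rewrite big_cat !big_map /=.
under eq_bigr do rewrite label_prob_cons.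
under [X in _ + X]eq_bigr do rewrite label_prob_cons.
rewrite -big_split /=; under eq_bigr do rewrite -mulrDl.
rewrite -mulr_sumr sum_step (eq_step IH).
by case: (f x); rewrite /= ?addr0 ?add0r mul1r.
Qed.

Lemma moment_label_prob f s t : Gam != [::] ->
  moment f s.+1 t.+1 = \sum_x \sum_(u <- bitseqs s) \sum_(v <- bitseqs t)
    ratr (label_prob Gam f x (true :: u ++ true :: v ++ [:: true])).
Proof.
move=> Gam_neq_nil.
have prob_true y u : ratr (label_prob Gam f y (true :: u)) =
    ind f y * step (fun z => ratr (label_prob Gam f z u)) y.
  by rewrite label_prob_cons eqb_id.
have prob_last y : ratr (label_prob Gam f y [:: true]) = ind f y.
  rewrite prob_true (eq_step (fun=> rmorph1 _)) step_cst ?mulr1 //.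
have last_block z : \sum_(v <- bitseqs t)
    ratr (label_prob Gam f z (true :: v ++ [:: true])) = ind f z * iter t.+1 step (ind f) z.
  under eq_bigr do rewrite prob_true.
  rewrite -mulr_sumr sum_step (eq_step (sum_bitseqs_label_prob _ _ _)) /=.
  by rewrite (eq_step (eq_iter_step _ prob_last)).
have middle_block y : \sum_(u <- bitseqs s) \sum_(v <- bitseqs t)
    ratr (label_prob Gam f y (u ++ true :: v ++ [:: true])) =
    iter s step (fun z => ind f z * iter t.+1 step (ind f) z) y.
  rewrite exchange_big /=; under eq_bigr do rewrite sum_bitseqs_label_prob.
  by rewrite sum_iter_step; apply: eq_iter_step.
rewrite /moment; apply: eq_bigr => x _.
under eq_bigr do (under eq_bigr do rewrite prob_true; rewrite -mulr_sumr sum_step).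
by rewrite -mulr_sumr sum_step (eq_step middle_block).
Qed.

Lemma moment_same_label_law f1 f2 s t : Gam != [::] -> same_label_law Gam f1 f2 ->
  moment f1 s.+1 t.+1 = moment f2 s.+1 t.+1.
Proof.
move=> Gam_neq_nil same_law; rewrite !moment_label_prob //.
have sum_prob f u :
    \sum_x ratr (label_prob Gam f x u) = p%:R * ratr (label_law Gam f u) :> algC.
  rewrite /label_law card_ord rmorphM fmorphV rmorph_nat rmorph_sum.
  by rewrite mulrA mulfV ?mul1r // pnatr_eq0.
rewrite exchange_big [RHS]exchange_big; apply: eq_bigr => u _.
rewrite exchange_big [RHS]exchange_big; apply: eq_bigr => v _.
by rewrite !sum_prob same_law.
Qed.

Section NonzeroDrift.
Hypotheses (p_prime : prime p) (p_gt2 : (2 < p)%N) (drift_neq0 : drift Gam != 0).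

Lemma Gam_neq_nil : Gam != [::].
Proof. by apply: contraNneq drift_neq0 => ->; rewrite /drift big_nil. Qed.

Lemma drift_map_mulr xi : drift [seq g * xi | g <- Gam] = drift Gam * xi.
Proof. by rewrite /drift big_map mulr_suml. Qed.

Lemma eig_neq0 xi : eig xi != 0.
Proof.
have [-> | xi_neq0] := eqVneq xi 0.
  suff -> : eig 0 = 1 by exact: oner_neq0.
  rewrite /eig; under eq_bigr do rewrite mulr0 chi0.
  exact: (step_cst 1 0 Gam_neq_nil).
apply: contra drift_neq0 => eig0.
have : \sum_(g <- [seq g * xi | g <- Gam]) chi g = 0.
  move: eig0; rewrite /eig big_map mulf_eq0 invr_eq0 pnatr_eq0 size_eq0.
  by rewrite (negbTE Gam_neq_nil) => /eqP.
move/(sum_chi_eq0 p_prime p_gt2); rewrite -/(drift _) drift_map_mulr => D_xi0.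
have xi_unit : xi \is a GRing.unit by rewrite Zp_unitE.
by apply/eqP; apply: (mulIr xi_unit); rewrite D_xi0 mul0r.
Qed.

Lemma eig_inj : injective eig.
Proof.
move=> xi zeta eq_eig.
have m_inv_neq0 : (m%:R^-1 : algC) != 0 by rewrite invr_eq0 pnatr_eq0 size_eq0 Gam_neq_nil.
have sum_eq : \sum_(g <- [seq g * xi | g <- Gam]) chi g =
              \sum_(g <- [seq g * zeta | g <- Gam]) chi g.
  by apply: (mulfI m_inv_neq0); rewrite !big_map.
have size_eq : size [seq g * xi | g <- Gam] = size [seq g * zeta | g <- Gam].
  by rewrite !size_map.
have perm_xi_zeta := perm_eq_sum_chi p_prime size_eq sum_eq.
have D_unit : drift Gam \is a GRing.unit by rewrite Zp_unitE.
by apply: (mulrI D_unit); rewrite -!drift_map_mulr /drift (perm_big _ perm_xi_zeta).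
Qed.

Lemma reconstructive_of_drift : reconstructive Gam.
Proof.
move=> f1 f2 same_law; apply: bispectrum_dft_ind_inj => //.
have p2_neq0 : (p%:R ^- 2 : algC) != 0 by rewrite invr_eq0 expf_neq0 // pnatr_eq0.
move=> zeta xi; apply: (mulfI p2_neq0); move: zeta xi.
apply: (power_sums2_eq eig_inj eig_neq0) => s t.
by rewrite -!moment_bispectrum; apply: moment_same_label_law; rewrite ?Gam_neq_nil.
Qed.

End NonzeroDrift.
End RandomWalk. End Fourier.

Theorem theorem3 (n : nat) (Gam : seq 'Z_n) :
  prime n -> (5 < n)%N -> drift Gam != 0 -> reconstructive Gam.
Proof.
case: n Gam => [|[|p']] Gam n_prime n_gt5 drift_neq0 //.
have [w w_prim] := C_prim_root_exists (ltn0Sn p'.+1).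
exact: (reconstructive_of_drift w_prim n_prime (ltn_trans _ n_gt5) drift_neq0).
Qed.
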